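(* For all real numbers $x,y$ with $1 \leqslant y \leqslant x$, \[ \frac{-N(x)}{x}=\sum_{k \leqslant y} \frac{\Lambda(k)}{k} \frac{M(x/k)}{x/k}+\sum_{j \leqslant x/y} \frac{\mu(j)}{j} \frac{\psi(x/j)-x/j}{x/j}-\frac{\psi(y)-y}{y}\frac{M(x/y)}{x/y}+m_1(x/y). \]
   Context: $\mu$ is the Möbius function and $\Lambda$ the von Mangoldt function ($\Lambda(n)=\log p$ if $n=p^k$ with $p$ prime and $k\geqslant 1$, else $0$). For real $x>0$: $M(x)=\sum_{n\leqslant x}\mu(n)$, $m(x)=\sum_{n\leqslant x}\mu(n)/n$, $m_1(x)=m(x)-M(x)/x=\sum_{n\leqslant x}\frac{\mu(n)}{n}(1-n/x)$, $N(x)=\sum_{n\leqslant x}\mu(n)\log n$, $\psi(x)=\sum_{n\leqslant x}\Lambda(n)$. Sums run over positive integers. *)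

From Stdlib Require Import Reals ZArith.
From mathcomp Require Import ssreflect ssrbool eqtype ssrnat seq prime.
Open Scope R_scope.

(* floor of a real number, as a nat (0 for negative reals) *)
Definition nfloor (x : R) : nat := Z.to_nat (Int_part x).

Definition sum_le (x : R) (f : nat -> R) : R :=
  foldr Rplus 0 (map f (iota 1 (nfloor x))).

(* Moebius function: 0 at 0 (never used), (-1)^omega(n) if n squarefree, else 0 *)
Definition mu (n : nat) : R :=
  if n == 0%nat then 0
  else if all (fun p => logn p n == 1%nat) (primes n)
       then (-1) ^ size (primes n) else 0.

(* von Mangoldt function: log p if n = p^k, k >= 1, p prime; else 0 *)
Definition Lambda (n : nat) : R :=
  match primes n with
  | [:: p] => ln (INR p)
  | _ => 0
  end.

Definition Mmu (x : R) : R := sum_le x mu.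
Definition mmu (x : R) : R := sum_le x (fun n => mu n / INR n).
Definition m1 (x : R) : R := mmu x - Mmu x / x.
Definition Nmu (x : R) : R := sum_le x (fun n => mu n * ln (INR n)).
Definition psi (x : R) : R := sum_le x Lambda.

(* The identity -mu(n) log n = sum_(d | n) Lambda(d) mu(n/d) is checked prime by
   prime: if p^v exactly divides n, then sum_(1 <= a <= v) mu(n/p^a) = -v mu(n).
   Summing over n <= x gives -N(x) = sum_(kj <= x) Lambda(k) mu(j), and Dirichlet's
   hyperbola method splits this sum along k <= y and j <= x/y:
     -N(x) = sum_(k <= y) Lambda(k) M(x/k) + sum_(j <= x/y) mu(j) psi(x/j)
             - psi(y) M(x/y).
   Dividing by x and writing psi(t) = (psi(t) - t) + t produces the stated terms,
   the leftover being m(x/y) - M(x/y)/(x/y) = m1(x/y). *)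

From HB Require Import structures.
From Stdlib Require Import Reals Lra.
From mathcomp Require Import ssreflect ssrfun ssrbool eqtype ssrnat seq div bigop prime.
From mathcomp Require Import zify.
Open Scope R_scope.

Lemma RplusA : associative Rplus.
Proof. by move=> a b c; rewrite Rplus_assoc. Qed.

HB.instance Definition _ :=
  Monoid.isComLaw.Build R 0 Rplus RplusA Rplus_comm Rplus_0_l.
HB.instance Definition _ := Monoid.isMulLaw.Build R 0 Rmult Rmult_0_l Rmult_0_r.
HB.instance Definition _ :=
  Monoid.isAddLaw.Build R Rmult Rplus Rmult_plus_distr_r Rmult_plus_distr_l.

Local Notation "\sum_ ( m <= i < n | P ) F" :=
  (\big[Rplus/0]_(m <= i < n | P) F) : R_scope.
Local Notation "\sum_ ( m <= i < n ) F" := (\big[Rplus/0]_(m <= i < n) F) : R_scope.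
Local Notation "\sum_ ( i <- r | P ) F" := (\big[Rplus/0]_(i <- r | P) F) : R_scope.
Local Notation "\sum_ ( i <- r ) F" := (\big[Rplus/0]_(i <- r) F) : R_scope.

Lemma big_Ropp (I : Type) (r : seq I) (P : pred I) (F : I -> R) :
  - \sum_(i <- r | P i) F i = \sum_(i <- r | P i) - F i.
Proof. by apply: big_morph => [a b|]; rewrite ?Ropp_plus_distr ?Ropp_0. Qed.

Lemma INR_expn (p a : nat) : INR (p ^ a) = INR p ^ a.
Proof. by elim: a => [|a IH]; rewrite ?expn0 // expnS mult_INR IH. Qed.

Lemma INR_gt0 {n : nat} : (0 < n)%N -> 0 < INR n.
Proof. by move/ltP; apply: lt_0_INR. Qed.

Lemma Rle_div_iff (a b c : R) : 0 < c -> a <= b / c <-> a * c <= b.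
Proof.
move=> c0; have bc : b / c * c = b by field; lra.
by split=> h; [rewrite -bc; apply: Rmult_le_compat_r | apply: (Rmult_le_reg_r c)]; lra.
Qed.

Lemma leq_nfloor {z : R} (n : nat) : 0 <= z -> (n <= nfloor z)%N <-> INR n <= z.
Proof.
move=> z0; rewrite /nfloor; have [lo hi] := base_Int_part z.
have I0 : (-1 < Int_part z)%Z by apply: lt_IZR; lra.
rewrite INR_IZR_INZ; split => [/leP le_n | le_n].
- by apply: Rle_trans lo; apply: IZR_le; lia.
- have : (Z.of_nat n < Int_part z + 1)%Z by apply: lt_IZR; rewrite plus_IZR; lra.
  by move=> lt_n; apply/leP; lia.
Qed.

Lemma nfloor_le (z : R) : 0 <= z -> INR (nfloor z) <= z.
Proof. by move=> z0; apply/(leq_nfloor _ z0). Qed.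

Lemma lt_nfloor (z : R) : 0 <= z -> z < INR (nfloor z) + 1.
Proof.
move=> z0; apply: Rnot_le_lt; rewrite -S_INR => /(leq_nfloor _ z0).
by rewrite ltnn.
Qed.

Lemma nfloor_divn (x : R) (k : nat) : 0 <= x -> (0 < k)%N ->
  nfloor (x / INR k) = (nfloor x %/ k)%N.
Proof.
move=> x0 k0; have kp := INR_gt0 k0.
have xk0 : 0 <= x / INR k by apply: Rle_mult_inv_pos.
have le_iff n : (n <= nfloor (x / INR k))%N = (n <= nfloor x %/ k)%N.
  apply/idP/idP; rewrite leq_divRL //.
  - move/(leq_nfloor n xk0)/(Rle_div_iff _ _ _ kp) => le_n.
    by apply/(leq_nfloor _ x0); rewrite mult_INR.
  - move/(leq_nfloor _ x0); rewrite mult_INR => le_n.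
    by apply/(leq_nfloor n xk0)/(Rle_div_iff _ _ _ kp).
by apply/eqP; rewrite eqn_leq le_iff leqnn -le_iff leqnn.
Qed.

Lemma nfloor_mul_div_bounds (x y : R) : 0 <= x -> 0 < y ->
  (nfloor y * nfloor (x / y) <= nfloor x < (nfloor y).+1 * (nfloor (x / y)).+1)%N.
Proof.
move=> x0 y0; have y0' : 0 <= y by lra.
have xy0 : 0 <= x / y by apply: Rle_mult_inv_pos.
have xyE : y * (x / y) = x by field; lra.
apply/andP; split.
- apply/(leq_nfloor _ x0); rewrite mult_INR -[X in _ <= X]xyE.
  by apply: Rmult_le_compat; (apply: pos_INR || exact: nfloor_le).
- rewrite ltnNge; apply/negP => /(leq_nfloor _ x0); rewrite mult_INR !S_INR.
  have : y * (x / y) < (INR (nfloor y) + 1) * (INR (nfloor (x / y)) + 1).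
    by apply: Rmult_le_0_lt_compat => //; apply: lt_nfloor.
  lra.
Qed.

Lemma sum_leE (z : R) (f : nat -> R) :
  sum_le z f = \sum_(1 <= n < (nfloor z).+1) f n.
Proof. by rewrite /sum_le foldrE big_map /index_iota subSS subn0. Qed.

Lemma eq_sum_le (z : R) (f g : nat -> R) :
  (forall n, (0 < n)%N -> f n = g n) -> sum_le z f = sum_le z g.
Proof. by move=> fg; rewrite !sum_leE; apply: eq_big_nat => n /andP[n0 _]; apply: fg. Qed.

Lemma sum_le_divr (z c : R) (f : nat -> R) :
  sum_le z (fun n => f n / c) = sum_le z f / c.
Proof. by rewrite !sum_leE /Rdiv big_distrl. Qed.

Lemma sum_leB (z : R) (f g : nat -> R) :
  sum_le z (fun n => f n - g n) = sum_le z f - sum_le z g.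
Proof. by rewrite !sum_leE big_split -big_Ropp. Qed.

Lemma sum_multiples (d X : nat) (G : nat -> R) : (0 < d)%N ->
  \sum_(1 <= n < X.+1 | d %| n) G (n %/ d) = \sum_(1 <= j < (X %/ d).+1) G j.
Proof.
move=> d0; elim: X => [|X IH]; first by rewrite div0n !big_geq.
rewrite big_mkcond big_nat_recr //= -big_mkcond IH divnS //.
case: ifP => [dX | _]; last by rewrite Rplus_0_r.
by rewrite dX add1n [RHS]big_nat_recr.
Qed.

Lemma divisors_perm_iota (n X : nat) : (0 < n <= X)%N ->
  perm_eq (divisors n) [seq d <- index_iota 1 X.+1 | d %| n].
Proof.
case/andP=> n0 nX; apply: uniq_perm; rewrite ?divisors_uniq ?filter_uniq ?iota_uniq //.
move=> d; rewrite mem_filter mem_index_iota -dvdn_divisors //.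
apply/idP/idP => [dn | /andP[] //].
by rewrite dn (dvdn_gt0 n0 dn) /= ltnS (leq_trans (dvdn_leq n0 dn)).
Qed.

Lemma sum_dirichlet_convolution (X : nat) (F : nat -> nat -> R) :
  \sum_(1 <= n < X.+1) \sum_(d <- divisors n) F d (n %/ d) =
  \sum_(1 <= k < X.+1) \sum_(1 <= j < (X %/ k).+1) F k j.
Proof.
under eq_big_nat => n nX do
  rewrite (perm_big _ (divisors_perm_iota _ _ nX)) big_filter big_mkcond.
rewrite exchange_big_nat; apply: eq_big_nat => k /andP[k0 _].
by rewrite -big_mkcond sum_multiples.
Qed.

Lemma sum_nat_pairs_widen (N a : nat) (b : nat -> nat) (F : nat -> nat -> R) :
  (a <= N)%N -> (forall k, (b k <= N)%N) ->
  \sum_(1 <= k < a.+1) \sum_(1 <= j < (b k).+1) F k j =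
  \sum_(1 <= k < N.+1) \sum_(1 <= j < N.+1)
     (if (k <= a)%N && (j <= b k)%N then F k j else 0).
Proof.
move=> aN bN; rewrite (big_nat_widen _ _ N.+1) // big_mkcond.
apply: eq_bigr => k _; rewrite ltnS; case: (k <= a)%N => /=; last by rewrite big1.
by rewrite (big_nat_widen _ _ N.+1) ?big_mkcond; last exact: bN.
Qed.

Lemma dirichlet_hyperbola (X Y Z : nat) (F : nat -> nat -> R) :
  (Y * Z <= X < Y.+1 * Z.+1)%N ->
  \sum_(1 <= k < X.+1) \sum_(1 <= j < (X %/ k).+1) F k j =
    \sum_(1 <= k < Y.+1) \sum_(1 <= j < (X %/ k).+1) F k j
  + \sum_(1 <= j < Z.+1) \sum_(1 <= k < (X %/ j).+1) F k j
  - \sum_(1 <= k < Y.+1) \sum_(1 <= j < Z.+1) F k j.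
Proof.
case/andP=> YZ_le XYZ_lt; set N := (X + Y + Z)%N.
have divN k : (X %/ k <= N)%N by rewrite (leq_trans (leq_div X k)) // /N; lia.
have [XN YN ZN] : [/\ X <= N, Y <= N & Z <= N]%N by rewrite /N; split; lia.
rewrite (sum_nat_pairs_widen _ _ _ _ XN divN) (sum_nat_pairs_widen _ _ _ _ YN divN).
rewrite (sum_nat_pairs_widen _ _ _ (fun j k => F k j) ZN divN).
rewrite (sum_nat_pairs_widen _ _ (fun _ => Z) _ YN (fun _ => ZN)).
rewrite [X in _ = _ + X - _]exchange_big_nat.
have sum_eq (A B C D : R) : A + D = B + C -> A = B + C - D by lra.
apply: sum_eq; rewrite -!big_split; apply: eq_big_nat => k /andP[k0 _].
rewrite -!big_split; apply: eq_big_nat => j /andP[j0 _] /=.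
(* Pointwise: the box k <= Y, j <= Z lies under the hyperbola jk <= X, and the
   region under the hyperbola is covered by the strips k <= Y and j <= Z. *)
rewrite !leq_divRL // [(k * j)%N]mulnC.
have k_le_X : (j * k <= X)%N ==> (k <= X)%N.
  by apply/implyP => /(leq_trans _); apply; rewrite leq_pmull.
have in_box : (k <= Y)%N && (j <= Z)%N ==> (j * k <= X)%N.
  by apply/implyP => /andP[kY jZ]; rewrite (leq_trans _ YZ_le) // mulnC leq_mul.
have out_box : (j * k <= X)%N ==> (k <= Y)%N || (j <= Z)%N.
  apply/implyP; apply: contraLR; rewrite negb_or -!ltnNge => /andP[Yk Zj].
  by rewrite (leq_trans XYZ_lt) // mulnC leq_mul.
move: k_le_X in_box out_box.
by case: (k <= Y)%N (j <= Z)%N (j * k <= X)%N (k <= X)%N => [] [] [] [] //= _ _ _; lra.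
Qed.

Lemma mu_eq0 (n p : nat) : prime p -> (p ^ 2 %| n)%N -> mu n = 0.
Proof.
move=> pp p2n; rewrite /mu; case: eqP => // /eqP n0.
have pn : p \in primes n.
  by rewrite mem_primes pp lt0n n0 (dvdn_trans (dvdn_mulr p (dvdnn p)) p2n).
have : (2 <= logn p n)%N by rewrite -pfactor_dvdn ?lt0n.
by case: allP => // /(_ p pn) /eqP ->.
Qed.

Lemma mu_mul_prime (m p : nat) : prime p -> coprime p m -> (0 < m)%N ->
  mu (m * p) = - mu m.
Proof.
move=> pp cpm m0; have p0 := prime_gt0 pp.
have pm : p \notin primes m by rewrite mem_primes pp m0 /= -prime_coprime.
have primesE : perm_eq (primes (m * p)) (p :: primes m).
  apply: uniq_perm; rewrite ?primes_uniq //= ?pm ?primes_uniq // => q.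
  by rewrite primesM // (primes_prime pp) !inE orbC.
have lognE q : q \in primes m -> logn q (m * p) = logn q m.
  move=> qm; rewrite lognM // (logn_prime q pp).
  case: eqVneq => [qp | _]; last exact: addn0.
  by move: pm; rewrite -qp qm.
have [mp0 m0'] : (m * p != 0)%N /\ (m != 0)%N by rewrite -!lt0n muln_gt0 m0 p0.
rewrite /mu (negPf mp0) (negPf m0') (perm_size primesE) (perm_all _ primesE) /=.
rewrite lognM // (logn_prime p pp) eqxx (logn_coprime cpm) /=.
rewrite (eq_in_all (a2 := fun q => logn q m == 1%N)) => [|q /lognE-> //].
by case: all; lra.
Qed.

Lemma sum_mu_div_prime_pow (n p : nat) : prime p -> (0 < n)%N ->
  \sum_(1 <= a < (logn p n).+1) mu (n %/ p ^ a) = - (INR (logn p n) * mu n).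
Proof.
move=> pp n0; have [m cpm En] := pfactor_coprime pp n0.
have m0 : (0 < m)%N by move: n0; rewrite En muln_gt0 => /andP[].
have p2_dvd c : (2 <= c)%N -> (p ^ 2 %| m * p ^ c)%N.
  by move=> c2; rewrite dvdn_mull // dvdn_exp2l.
move: (logn p n) En => v En; rewrite {n n0}En.
have divE a : (a <= v)%N -> (m * p ^ v %/ p ^ a = m * p ^ (v - a))%N.
  by move=> av; rewrite -{1}(subnK av) expnD mulnA mulnK // expn_gt0 prime_gt0.
rewrite (eq_big_nat _ _ (F2 := fun a => mu (m * p ^ (v - a)))); last first.
  by move=> a /andP[_ av]; rewrite divE.
(* Only a = v - 1 and a = v can contribute: the other quotients are divisible
   by p^2. *)
case: v {divE} => [|[|w]].
- by rewrite big_geq //=; ring.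
- by rewrite big_nat1 subnn expn0 muln1 expn1 mu_mul_prime //=; ring.
rewrite big_nat_recr // big_nat_recr //= big_nat_cond big1 => [|a /andP[/andP[_ aw] _]].
  by rewrite subnn subSnn muln1 mu_mul_prime // (mu_eq0 _ _ pp (p2_dvd _ _)) //; ring.
by rewrite (mu_eq0 _ _ pp (p2_dvd _ _)) //; lia.
Qed.

Lemma ln_nat_decomp (n : nat) : (0 < n)%N ->
  ln (INR n) = \sum_(p <- primes n) INR (logn p n) * ln (INR p).
Proof.
move=> n0; rewrite {1}(prod_prime_decomp n0) prime_decompE big_map /=.
rewrite big_seq [RHS]big_seq.
pose ln_of a b := (0 < a)%N /\ ln (INR a) = b.
suff [] : ln_of (\prod_(p <- primes n | p \in primes n) p ^ logn p n)%N
                (\sum_(p <- primes n | p \in primes n) INR (logn p n) * ln (INR p)) by [].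
apply: big_ind2 => [|a b c d [a0 <-] [c0 <-] | p].
- by split; rewrite //= ln_1.
- by split; rewrite ?muln_gt0 ?a0 // mult_INR ln_mult //; apply: INR_gt0.
- rewrite mem_primes => /andP[/prime_gt0 p0 _]; split; first by rewrite expn_gt0 p0.
  by rewrite INR_expn ln_pow //; apply: INR_gt0.
Qed.

Lemma Lambda_prime_pow (p a : nat) : prime p -> (0 < a)%N ->
  Lambda (p ^ a) = ln (INR p).
Proof. by move=> pp a0; rewrite /Lambda primesX // primes_prime. Qed.

Lemma primes1_pfactor (d p : nat) : primes d = [:: p] -> d = (p ^ logn p d)%N.
Proof.
move=> dp; have d0 : (0 < d)%N by case: d dp.
by rewrite {1}(prod_prime_decomp d0) prime_decompE dp big_seq1.
Qed.

Lemma perm_divisors_prime_pow (n p : nat) : (0 < n)%N -> prime p ->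
  perm_eq [seq d <- divisors n | primes d == [:: p]]
          [seq p ^ a | a <- index_iota 1 (logn p n).+1]%N.
Proof.
move=> n0 pp; apply: uniq_perm.
- by rewrite filter_uniq ?divisors_uniq.
- by rewrite map_inj_uniq ?iota_uniq //; apply/expnI/prime_gt1.
move=> d; rewrite mem_filter -dvdn_divisors //; apply/andP/mapP => [[/eqP dp dn] | [a]].
- exists (logn p d); last exact: primes1_pfactor.
  rewrite mem_index_iota logn_gt0 dp mem_seq1 eqxx ltnS -pfactor_dvdn //.
  by rewrite -primes1_pfactor.
- rewrite mem_index_iota => /andP[a0 av] ->.
  by rewrite primesX // primes_prime // pfactor_dvdn.
Qed.

Lemma sum_divisors_Lambda (n : nat) (f : nat -> R) : (0 < n)%N ->
  \sum_(d <- divisors n) Lambda d * f d =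
  \sum_(p <- primes n) ln (INR p) * \sum_(1 <= a < (logn p n).+1) f (p ^ a)%N.
Proof.
move=> n0; transitivity
  (\sum_(p <- primes n) \sum_(d <- divisors n | primes d == [:: p]) Lambda d * f d).
  rewrite (exchange_big_dep predT) //=; apply: eq_big_seq => d dn.
  case dp: (primes d) => [|q [|r s]]; rewrite /Lambda dp ?Rmult_0_l; try by rewrite big1.
  have qn : q \in primes n.
    move: (mem_head q [::]); rewrite -dp !mem_primes n0 => /and3P[-> _ qd].
    by rewrite (dvdn_trans qd) // dvdn_divisors.
  rewrite (eq_bigl (pred1 q)) => [|p]; last by rewrite /= eqseq_cons andbT eq_sym.
  by rewrite -big_filter filter_pred1_uniq ?primes_uniq // big_seq1.
apply: eq_big_seq => p; rewrite mem_primes => /andP[pp _].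
rewrite -big_filter (perm_big _ (perm_divisors_prime_pow _ _ n0 pp)) big_map big_distrr.
by apply: eq_big_nat => a /andP[a0 _]; rewrite Lambda_prime_pow.
Qed.

Lemma Lambda_mu_convolution (n : nat) : (0 < n)%N ->
  \sum_(d <- divisors n) Lambda d * mu (n %/ d) = - (mu n * ln (INR n)).
Proof.
move=> n0; rewrite (sum_divisors_Lambda _ (fun d => mu (n %/ d))) // ln_nat_decomp //.
rewrite big_distrr /= big_Ropp; apply: eq_big_seq => p; rewrite mem_primes => /andP[pp _].
by rewrite sum_mu_div_prime_pow //; ring.
Qed.

Lemma oppNmu_sum_Lambda_mu (x : R) :
  - Nmu x =
  \sum_(1 <= k < (nfloor x).+1) \sum_(1 <= j < (nfloor x %/ k).+1) Lambda k * mu j.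
Proof.
rewrite /Nmu sum_leE big_Ropp -(sum_dirichlet_convolution _ (fun k j => Lambda k * mu j)).
by apply: eq_big_nat => n /andP[n0 _]; rewrite Lambda_mu_convolution.
Qed.

Lemma hyperbola_Nmu (x y : R) : 0 <= x -> 0 < y ->
  - Nmu x = sum_le y (fun k => Lambda k * Mmu (x / INR k))
          + sum_le (x / y) (fun j => mu j * psi (x / INR j))
          - psi y * Mmu (x / y).
Proof.
move=> x0 y0; rewrite oppNmu_sum_Lambda_mu.
rewrite (dirichlet_hyperbola _ (nfloor y) (nfloor (x / y))) ?nfloor_mul_div_bounds //.
rewrite /psi /Mmu !sum_leE big_distrl /=.
congr (_ + _ - _); apply: eq_big_nat => k /andP[k0 _].
- by rewrite sum_leE nfloor_divn // big_distrr.
- by rewrite sum_leE nfloor_divn // big_distrr; apply: eq_bigr => j _ /=; ring.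
- by rewrite big_distrr.
Qed.

Theorem mainTheorem3 (x y : R) (hy1 : 1 <= y) (hyx : y <= x) :
  - Nmu x / x =
    sum_le y (fun k => Lambda k / INR k * (Mmu (x / INR k) / (x / INR k)))
  + sum_le (x / y) (fun j => mu j / INR j * ((psi (x / INR j) - x / INR j) / (x / INR j)))
  - (psi y - y) / y * (Mmu (x / y) / (x / y))
  + m1 (x / y).
Proof.
have [x0 y0] : 0 <= x /\ 0 < y by lra.
have INR_neq0 k : (0 < k)%N -> INR k <> 0 by move/INR_gt0; lra.
rewrite (eq_sum_le y _ (fun k => Lambda k * Mmu (x / INR k) / x)) => [|k /INR_neq0 k0];
  last by field; split => //; lra.
rewrite (eq_sum_le (x / y) _ (fun j => mu j * psi (x / INR j) / x - mu j / INR j))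
  => [|j /INR_neq0 j0]; last by field; split => //; lra.
rewrite sum_leB !sum_le_divr (hyperbola_Nmu x y) // /m1 /mmu.
by field; lra.
Qed.
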